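(* Suppose (C2) holds. Then the LMS sampling design is a high entropy sampling design. Moreover, under each of SRSWOR, the LMS design and any HE$\pi$PS design, for $\mathbb P$-almost every $\omega$ there are constants $M,M'>0$ such that for all sufficiently large $\nu$, $M\le n^{-1}N\pi_i\le M'$ for all $1\le i\le N$.
   Context: Sequence of nested finite populations of $N=N_\nu$ units with sample size $n=n_\nu<N$, $N,n\to\infty$ as $\nu\to\infty$; size variable values $X_1,\dots,X_N$ are i.i.d. positive random variables on $(\Omega,\mathcal F,\mathbb P)$ (part of i.i.d. population records). A sampling design is $P(s,\omega)$, a probability on the size-$n$ subsets $s$ for each $\omega$; $\pi_i=\sum_{s\ni i}P(s,\omega)$. SRSWOR: each $s$ with probability $\binom Nn^{-1}$. LMS: first unit $U_i$ drawn with probability $X_i/\sum_jX_j$, then $n-1$ units by SRSWOR from the remaining $N-1$. Rejective design (parameters $\alpha_i>0$, $\sum\alpha_i=1$): $n$ draws with replacement with probabilities $\alpha_i$, repeated until $n$ distinct units are drawn. A design is high entropy if $\sum_sP(s,\omega)\log(P(s,\omega)/R(s,\omega))\to0$ as $\nu\to\infty$ a.s. $[\mathbb P]$ for some rejective design $R(s,\omega)$. $\pi$PS: $\pi_i=nX_i/\sum_jX_j$. HE$\pi$PS: high entropy and $\pi$PS. (C2): $X_i\le b$ a.s. for some $0<b<\infty$, $E(X_i^{-2})<\infty$, and $\max_{i\le N}X_i/\min_{i\le N}X_i=O(1)$ as $\nu\to\infty$ a.s. $[\mathbb P]$. *)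

From HB Require Import structures.
From mathcomp Require Import all_boot all_order all_algebra.
From mathcomp Require Import all_classical all_reals all_analysis.

Unset Implicit Arguments.
Unset Strict Implicit.
Unset Printing Implicit Defensive.

Import Order.TTheory GRing.Theory Num.Theory.
Import numFieldNormedType.Exports.

Local Open Scope classical_set_scope.
Local Open Scope ring_scope.

Section Defs.
Context {R : realType} {d : measure_display} {T : measurableType d}.
Variable P : probability T R.

Definition mutually_independent (X : nat -> {RV P >-> R}) : Prop :=
  forall (s : seq nat) (A : nat -> set R),
    uniq s -> (forall i, measurable (A i)) ->
    P (\bigcap_(i in [set` s]) (X i @^-1` A i)) =
    (\prod_(i <- s) P (X i @^-1` A i))%E.

Definition identically_distributed (X : nat -> {RV P >-> R}) : Prop :=
  forall i (A : set R), measurable A ->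
    P (X i @^-1` A) = P (X 0%N @^-1` A).

Definition iid (X : nat -> {RV P >-> R}) : Prop :=
  mutually_independent X /\ identically_distributed X.

(** Population of stage nu = units 0 .. N nu - 1 (nested populations).
    A sampling design: for each nu and omega a function on subsets of
    the population. *)
Definition design (N : nat -> nat) : Type :=
  forall nu : nat, T -> {set 'I_(N nu)} -> R.

Definition is_design (N n : nat -> nat) (D : design N) : Prop :=
  forall nu omega,
    (forall s : {set 'I_(N nu)}, 0 <= D nu omega s) /\
    (forall s : {set 'I_(N nu)}, #|s| != n nu -> D nu omega s = 0) /\
    \sum_(s : {set 'I_(N nu)}) D nu omega s = 1.

Definition incl_prob (N : nat -> nat) (D : design N) nu omega
    (i : 'I_(N nu)) : R :=
  \sum_(s : {set 'I_(N nu)} | i \in s) D nu omega s.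

Definition pop_total (X : nat -> T -> R) (N : nat -> nat) nu omega : R :=
  \sum_(j < N nu) X j omega.

Definition SRSWOR (N n : nat -> nat) : design N :=
  fun nu omega s =>
    if #|s| == n nu then ('C(N nu, n nu))%:R^-1 else 0.

(** LMS: first unit i drawn with probability X_i / sum_j X_j, then
    n - 1 units by SRSWOR among the remaining N - 1 units. *)
Definition LMS (N n : nat -> nat) (X : nat -> T -> R) : design N :=
  fun nu omega s =>
    if #|s| == n nu then
      \sum_(i in s) (X i omega / pop_total X N nu omega) *
                    ('C((N nu).-1, (n nu).-1))%:R^-1
    else 0.

(** Rejective design with parameters alpha: n draws with replacement with
    probabilities alpha_i, repeated until n distinct units are drawn; i.e.
    the law of the drawn set conditional on the n draws being distinct. *)
Definition rejective (N n : nat -> nat)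
    (alpha : forall nu : nat, T -> 'I_(N nu) -> R) : design N :=
  fun nu omega s =>
    (\sum_(t : {ffun 'I_(n nu) -> 'I_(N nu)} |
             injectiveb t && ((t @: [set: 'I_(n nu)]) == s))
        \prod_(j < n nu) alpha nu omega (t j)) /
    (\sum_(t : {ffun 'I_(n nu) -> 'I_(N nu)} | injectiveb t)
        \prod_(j < n nu) alpha nu omega (t j)).

Definition rejective_params (N : nat -> nat)
    (alpha : forall nu : nat, T -> 'I_(N nu) -> R) : Prop :=
  forall nu omega,
    (forall i, 0 < alpha nu omega i) /\ \sum_(i < N nu) alpha nu omega i = 1.

(** Kullback-Leibler divergence sum_s P(s) log (P(s)/R(s))
    (with the convention 0 log 0 = 0, automatic since ln 0 = 0). *)
Definition KL (N : nat -> nat) (D D' : design N) nu omega : R :=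
  \sum_(s : {set 'I_(N nu)}) D nu omega s * ln (D nu omega s / D' nu omega s).

Definition high_entropy (N n : nat -> nat) (D : design N) : Prop :=
  exists alpha : forall nu : nat, T -> 'I_(N nu) -> R,
    rejective_params N alpha /\
    {ae P, forall omega,
      (fun nu => KL N D (rejective N n alpha) nu omega) @ \oo --> (0 : R)}.

Definition piPS (N n : nat -> nat) (X : nat -> T -> R) (D : design N) : Prop :=
  {ae P, forall omega, \forall nu \near \oo, forall i : 'I_(N nu),
      incl_prob N D nu omega i = (n nu)%:R * X i omega / pop_total X N nu omega}.

Definition incl_bounded (N n : nat -> nat) (D : design N) : Prop :=
  {ae P, forall omega, exists M M' : R, 0 < M /\ 0 < M' /\
     \forall nu \near \oo, forall i : 'I_(N nu),
        M <= (n nu)%:R^-1 * (N nu)%:R * incl_prob N D nu omega i <= M'}.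

Definition pop_max (X : nat -> T -> R) (N : nat -> nat) nu omega : R :=
  \big[Num.max/0]_(i < N nu) X i omega.
Definition pop_min (X : nat -> T -> R) (N : nat -> nat) nu omega : R :=
  \big[Num.min/X 0%N omega]_(i < N nu) X i omega.

Definition C2 (X : nat -> {RV P >-> R}) (N : nat -> nat) : Prop :=
  (exists b : R, 0 < b /\ forall i, {ae P, forall omega, X i omega <= b}) /\
  (forall i, (\int[P]_omega ((X i omega) ^-2)%:E < +oo)%E) /\
  {ae P, forall omega, exists K : R,
     \forall nu \near \oo, pop_max X N nu omega / pop_min X N nu omega <= K}.

End Defs.

(* Within one population, write x_i for the size values, T = sum_j x_i, and
   lo <= x_i <= hi.  The SRSWOR design is the rejective design with equal
   parameters, and the Kullback-Leibler divergence of LMS from it is at most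
   the chi-square divergence
     C(N,n) sum_{|s|=n} LMS(s)^2 - 1 <= N sum_i x_i^2 / (n T^2) <= (hi/lo)^2 / n,
   computed by counting the n-subsets that contain one or two given units.
   Under (C2), hi/lo <= K eventually, almost surely, so the divergence tends
   to 0 as n grows.  The inclusion probabilities are n/N for SRSWOR,
   x_i/T + (1 - x_i/T)(n-1)/(N-1) for LMS and n x_i/T for a piPS design, so
   N pi_i / n equals 1, lies in [1/2, K + 1], and lies in [1/K, K]. *)

From HB Require Import structures.
From mathcomp Require Import all_boot all_order all_algebra.
From mathcomp Require Import all_classical all_reals all_analysis.
From mathcomp Require Import zify ring lra.

Import Order.TTheory GRing.Theory Num.Theory.
Import numFieldNormedType.Exports.
Local Open Scope ring_scope.

Section KSubsets.
Context {T : finType}.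

Definition ksupsets k (A : {set T}) : {set {set T}} :=
  [set s : {set T} | (#|s| == k) && (A \subset s)].

Lemma card_ksupsets k (A : {set T}) : (#|A| <= k <= #|T|)%N ->
  #|ksupsets k A| = 'C(#|T| - #|A|, k - #|A|).
Proof.
move=> /andP[Ak kT].
rewrite -(card_imset _ (@finset.setC_inj _)).
have -> : [set ~: s | s in ksupsets k A] =
          [set u : {set T} | u \subset ~: A & #|u| == (#|T| - k)%N].
  apply/setP => u; rewrite !inE; apply/imsetP/idP.
    move=> [s]; rewrite inE => /andP[/eqP sk As] ->.
    by rewrite finset.setCS As cardsCs finset.setCK sk eqxx.
  move=> /andP[uA /eqP uk]; exists (~: u); last by rewrite finset.setCK.
  rewrite inE -finset.setCS finset.setCK uA andbT.
  by have := cardsC u; rewrite uk => /eqP; lia.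
rewrite cards_draws cardsCs finset.setCK -bin_sub; last lia.
by congr binomial; lia.
Qed.

Lemma card_ksupsets1 k i : (0 < k <= #|T|)%N ->
  #|ksupsets k [set i]| = 'C(#|T|.-1, k.-1).
Proof. by move=> kT; rewrite card_ksupsets cards1 ?subn1. Qed.

Lemma card_ksupsets2 k i j : i != j -> (1 < k <= #|T|)%N ->
  #|ksupsets k [set i; j]| = 'C(#|T|.-2, k.-2).
Proof. by move=> ij kT; rewrite card_ksupsets cards2 ij ?subn2. Qed.

Context {R : pzRingType}.
Implicit Types (f : T -> R) (c : R).

Lemma exchange_sum_mem (P : pred {set T}) (F : {set T} -> T -> R) :
  \sum_(s | P s) \sum_(i in s) F s i =
  \sum_i \sum_(s | P s && (i \in s)) F s i.
Proof.
under eq_bigr do rewrite big_mkcond /=.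
by rewrite exchange_big /=; apply: eq_bigr => i _; rewrite big_mkcondr.
Qed.

Lemma sum_ksupsets_const k (A : {set T}) (P : pred {set T}) c :
  (forall s, P s = (#|s| == k) && (A \subset s)) ->
  \sum_(s | P s) c = #|ksupsets k A|%:R * c.
Proof.
move=> PE; rewrite sumr_const mulr_natl; congr (_ *+ _).
by apply: eq_card => s; rewrite inE; exact: PE.
Qed.

Lemma sum_ksubsets_sum k f : (0 < k <= #|T|)%N ->
  \sum_(s : {set T} | #|s| == k) \sum_(i in s) f i =
  'C(#|T|.-1, k.-1)%:R * \sum_i f i.
Proof.
move=> kT; rewrite exchange_sum_mem mulr_sumr; apply: eq_bigr => i _.
rewrite (@sum_ksupsets_const k [set i]) ?card_ksupsets1 // => s.
by rewrite finset.sub1set.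
Qed.

Lemma sum_ksubsets_mem_sum k i0 f : (1 < k <= #|T|)%N ->
  \sum_(s : {set T} | (#|s| == k) && (i0 \in s)) \sum_(i in s) f i =
  'C(#|T|.-1, k.-1)%:R * f i0 + 'C(#|T|.-2, k.-2)%:R * \sum_(j | j != i0) f j.
Proof.
move=> kT; have kT' : (0 < k <= #|T|)%N by lia.
rewrite exchange_sum_mem (bigD1 i0) //= mulr_sumr; congr (_ + _).
  rewrite (@sum_ksupsets_const k [set i0]) ?card_ksupsets1 // => s.
  by rewrite finset.sub1set -andbA andbb.
apply: eq_bigr => j ji0.
rewrite (@sum_ksupsets_const k [set i0; j]) ?card_ksupsets2 // 1?eq_sym //.
by move=> s; rewrite finset.subUset !finset.sub1set andbA.
Qed.

Lemma sum_ksubsets_sqr k f : (1 < k <= #|T|)%N ->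
  \sum_(s : {set T} | #|s| == k) (\sum_(i in s) f i) ^+ 2 =
  'C(#|T|.-1, k.-1)%:R * \sum_i f i ^+ 2 +
  'C(#|T|.-2, k.-2)%:R * ((\sum_i f i) ^+ 2 - \sum_i f i ^+ 2).
Proof.
move=> kT; have offdiag : (\sum_i f i) ^+ 2 - \sum_i f i ^+ 2 =
                          \sum_i \sum_(j | j != i) f i * f j.
  rewrite expr2 big_distrl -sumrB; apply: eq_bigr => i _.
  by rewrite big_distrr (bigD1 i) //= expr2 addrAC subrr add0r.
under eq_bigr do rewrite expr2 big_distrl /=.
rewrite exchange_sum_mem offdiag !mulr_sumr -big_split /=; apply: eq_bigr => i _.
rewrite -mulr_sumr sum_ksubsets_mem_sum // mulrDr !mulr_natl !mulrnAr.
by rewrite mulr_sumr expr2.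
Qed.

End KSubsets.

Lemma card_inj_ffuns_onto (D T : finType) (s : {set T}) :
  #|[set t : {ffun D -> T} | injectiveb t && (t @: [set: D] == s)]| =
  if #|s| == #|D| then (#|D|)`! else 0%N.
Proof.
case: eqP => [sD|sD].
  rewrite -ffactnn -{1}sD -card_inj_ffuns_on; apply: eq_card => t; rewrite !inE.
  apply/andP/andP => [[t_inj /eqP <-]|[/ffun_onP ts t_inj]]; split => //.
    by apply/ffun_onP => j; apply: imset_f.
  rewrite eqEcard; apply/andP; split.
    by apply/fintype.subsetP => y /imsetP [j _ ->]; exact: ts.
  by rewrite card_imset ?cardsT ?sD //; apply/injectiveP.
apply: eq_card0 => t; rewrite !inE.
apply/negP => /andP [/injectiveP t_inj /eqP ts]; apply: sD.
by rewrite -ts card_imset // cardsT.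
Qed.

Lemma mul_bin_pred n k : (0 < k)%N -> (n * 'C(n.-1, k.-1) = k * 'C(n, k))%N.
Proof. by move=> k0; rewrite mul_bin_diag prednK. Qed.

Lemma natr_pred (R : pzRingType) n : (0 < n)%N -> n.-1%:R = n%:R - 1 :> R.
Proof. by move=> n0; rewrite -subn1 natrB. Qed.

Lemma ratio_pred_bounds {R : realFieldType} [m k : R] : 2 <= k -> k < m ->
  2^-1 <= m / k * ((k - 1) / (m - 1)) <= 1.
Proof.
move=> k2 km; have k0 : 0 < k by lra.
have m1 : 0 < m - 1 by lra.
rewrite mulrACA -invfM; apply/andP; split.
  by rewrite ler_pdivlMr ?mulr_gt0 // mulrC ler_pdivrMr //; nra.
by rewrite ler_pdivrMr ?mulr_gt0 // mul1r; nra.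
Qed.

Section KLDivergence.
Context {R : realType}.

Lemma ln_le_subr1 (y : R) : 0 < y -> ln y <= y - 1.
Proof.
by move=> y0; have := @le_ln1Dx R (y - 1); rewrite addrCA subrr addr0; apply; lra.
Qed.

Lemma ln_ge_subrV (y : R) : 0 < y -> 1 - y^-1 <= ln y.
Proof.
move=> y0; have := @ln_le_subr1 y^-1; rewrite invr_gt0 lnV ?posrE // => /(_ y0).
lra.
Qed.

Lemma mul_ln_div_bounds (p q : R) : 0 <= p -> 0 <= q -> (q = 0 -> p = 0) ->
  p - q <= p * ln (p / q) <= p ^+ 2 / q - p.
Proof.
move=> p0 q0 qp; have [->|pn0] := eqVneq p 0.
  by rewrite !(mul0r, expr2, subr0); lra.
have p_gt0 : 0 < p by rewrite lt_def pn0.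
have q_gt0 : 0 < q by rewrite lt_def q0 andbT; apply/eqP => /qp /eqP; exact/negP.
have y_gt0 : 0 < p / q by rewrite divr_gt0.
apply/andP; split.
  have -> : p - q = p * (1 - (p / q)^-1) by field; rewrite !gt_eqF.
  by rewrite ler_pM2l // ln_ge_subrV.
have -> : p ^+ 2 / q - p = p * (p / q - 1) by field; rewrite gt_eqF.
by rewrite ler_pM2l // ln_le_subr1.
Qed.

Lemma kl_div_bounds (I : finType) (p q : I -> R) :
  (forall i, 0 <= p i) -> (forall i, 0 <= q i) ->
  (forall i, q i = 0 -> p i = 0) ->
  \sum_i p i = 1 -> \sum_i q i = 1 ->
  0 <= \sum_i p i * ln (p i / q i) <= \sum_i p i ^+ 2 / q i - 1.
Proof.
move=> p0 q0 qp p1 q1.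
have bounds i := @mul_ln_div_bounds (p i) (q i) (p0 i) (q0 i) (@qp i).
apply/andP; split.
  apply: le_trans (ler_sum _ (fun i _ => proj1 (andP (bounds i)))).
  by rewrite sumrB p1 q1 subrr.
apply: le_trans (ler_sum _ (fun i _ => proj2 (andP (bounds i)))) _.
by rewrite sumrB p1.
Qed.

End KLDivergence.

Section SimpleRandomSampling.
Context {R : realType}.
Variables (N k : nat).

Definition srs (s : {set 'I_N}) : R := if #|s| == k then 'C(N, k)%:R^-1 else 0.

Hypotheses (k_gt0 : (0 < k)%N) (k_le_N : (k <= N)%N).

Let bin_gt0R : 0 < 'C(N, k)%:R :> R.
Proof. by rewrite ltr0n bin_gt0. Qed.

Lemma srs_ge0 s : 0 <= srs s.
Proof. by rewrite /srs; case: ifP => // _; rewrite invr_ge0 ler0n. Qed.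

Lemma srs_eq0 s : (srs s == 0) = (#|s| != k).
Proof.
rewrite /srs; case: (#|s| == k) => /=; last by rewrite eqxx.
by rewrite invr_eq0 gt_eqF ?bin_gt0R.
Qed.

Lemma srs_sum1 : \sum_s srs s = 1.
Proof.
rewrite -big_mkcond /= sumr_const -[X in _ *+ X]cardsE.
have -> : [set s : {set 'I_N} | #|s| == k] =
          [set s : {set 'I_N} | s \subset [set: 'I_N] & #|s| == k].
  by apply/setP => s; rewrite !inE finset.subsetT.
rewrite cards_draws cardsT card_ord -(mulr_natr 'C(N, k)%:R^-1).
by rewrite mulVf // gt_eqF ?bin_gt0R.
Qed.

Lemma srs_incl_prob (i : 'I_N) :
  \sum_(s : {set 'I_N} | i \in s) srs s = k%:R / N%:R.
Proof.
rewrite -big_mkcondl /= (@sum_ksupsets_const _ _ k [set i]); last first.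
  by move=> s; rewrite finset.sub1set andbC.
rewrite card_ksupsets1 ?card_ord ?k_gt0 //.
have N0 : N%:R != 0 :> R by rewrite pnatr_eq0 -lt0n (leq_trans k_gt0).
have binN : N%:R * 'C(N.-1, k.-1)%:R = k%:R * 'C(N, k)%:R :> R.
  by rewrite -!natrM mul_bin_pred.
apply: (mulfI N0); rewrite mulrA binN.
by field; rewrite N0 gt_eqF ?bin_gt0R.
Qed.

End SimpleRandomSampling.

Lemma rejective_const (R : realType) (d : measure_display) (T : measurableType d)
    (N n : nat -> nat) (a : nat -> T -> R) nu omega (s : {set 'I_(N nu)}) :
  (n nu <= N nu)%N -> a nu omega != 0 ->
  rejective N n (fun nu omega _ => a nu omega) nu omega s = SRSWOR N n nu omega s.
Proof.
move=> nN a0; rewrite /rejective /SRSWOR.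
(* [rejective] takes images of the classical [setT]. *)
have image_setT (t : {ffun 'I_(n nu) -> 'I_(N nu)}) :
    t @: [set: 'I_(n nu)]%classic = t @: [set: 'I_(n nu)].
  apply/setP => y; apply/imsetP/imsetP => -[j _ ->]; exists j => //.
  by rewrite inE.
under eq_bigl do rewrite image_setT.
under eq_bigr do rewrite prodr_const card_ord.
under [X in _ / X]eq_bigr do rewrite prodr_const card_ord.
rewrite !sumr_const -[X in _ *+ X]cardsE -[X in _ / (_ *+ X)]cardsE.
rewrite card_inj_ffuns card_inj_ffuns_onto !card_ord.
case: eqP => _; last by rewrite mulr0n mul0r.
have an0 : a nu omega ^+ n nu != 0 by rewrite expf_neq0.
have fact0 : (n nu)`!%:R != 0 :> R by rewrite pnatr_eq0 -lt0n fact_gt0.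
have bin0 : 'C(N nu, n nu)%:R != 0 :> R by rewrite pnatr_eq0 -lt0n bin_gt0.
rewrite -bin_ffact -[X in X / _]mulr_natr -[X in _ / X]mulr_natr natrM.
by field; rewrite fact0 bin0 an0.
Qed.

Section LahiriMidzunoSen.
Context {R : realType}.
Variables (N k : nat) (x : 'I_N -> R).

(* Unfolded, [LMS N n X nu omega] and [SRSWOR N n nu omega] are
   [lms (N nu) (n nu) (X ^~ omega)] and [srs (N nu) (n nu)]. *)
Definition lms (s : {set 'I_N}) : R :=
  if #|s| == k then
    \sum_(i in s) (x i / \sum_(j < N) x j) * 'C(N.-1, k.-1)%:R^-1
  else 0.

Hypotheses (x_gt0 : forall i, 0 < x i) (k_gt1 : (1 < k)%N) (k_lt_N : (k < N)%N).

Local Notation tot := (\sum_(j < N) x j).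
Local Notation c1 := ('C(N.-1, k.-1)%:R : R).
Local Notation c2 := ('C(N.-2, k.-2)%:R : R).
Local Notation sumsq := (\sum_(i < N) x i ^+ 2).

Let k_gt0 : (0 < k)%N. Proof. exact: ltnW. Qed.
Let kN : (0 < k <= #|'I_N|)%N. Proof. by rewrite card_ord k_gt0 ltnW. Qed.
Let kN2 : (1 < k <= #|'I_N|)%N. Proof. by rewrite card_ord k_gt1 ltnW. Qed.

Lemma tot_gt0 : 0 < tot.
Proof.
rewrite (bigD1 (Ordinal (leq_ltn_trans (leq0n k) k_lt_N))) //=.
by rewrite ltr_wpDr ?x_gt0 // sumr_ge0 // => i _; rewrite ltW.
Qed.

Let c1_gt0 : 0 < c1. Proof. by rewrite ltr0n bin_gt0; lia. Qed.

Lemma bin_pred2_ratio : c2 / c1 = (k%:R - 1) / (N%:R - 1).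
Proof.
have N1 : N%:R - 1 != 0 :> R by rewrite subr_eq0 pnatr_eq1; lia.
have k1 : (0 < k.-1)%N by lia.
have := congr1 (fun m => m%:R : R) (mul_bin_pred N.-1 k.-1 k1).
rewrite !natrM !natr_pred //; try lia; move=> binE.
by apply: (mulfI N1); rewrite mulrA binE; field; rewrite N1 gt_eqF.
Qed.

Lemma lms_ge0 (s : {set 'I_N}) : 0 <= lms s.
Proof.
rewrite /lms; case: ifP => // _; apply: sumr_ge0 => i _.
by rewrite mulr_ge0 ?invr_ge0 // divr_ge0 // ltW // tot_gt0.
Qed.

Lemma lms_kset (s : {set 'I_N}) :
  #|s| = k -> lms s = (\sum_(i in s) x i) / (tot * c1).
Proof. by move=> sk; rewrite /lms sk eqxx -mulr_suml -mulr_suml invfM mulrA. Qed.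

Lemma lms_sum1 : \sum_s lms s = 1.
Proof.
rewrite -big_mkcond /= (sum_ksubsets_sum _ _ kN) card_ord -mulr_suml -mulr_suml.
by field; rewrite !gt_eqF ?tot_gt0.
Qed.

Lemma lms_incl_prob (i : 'I_N) :
  \sum_(s : {set 'I_N} | i \in s) lms s =
  x i / tot + (1 - x i / tot) * ((k%:R - 1) / (N%:R - 1)).
Proof.
rewrite -big_mkcondl /= (sum_ksubsets_mem_sum _ _ _ kN2) card_ord.
rewrite -bin_pred2_ratio -!mulr_suml.
have -> : \sum_(j | j != i) x j = tot - x i.
  by rewrite [X in _ = X - _](bigD1 i) //= addrAC subrr add0r.
by field; rewrite !gt_eqF ?tot_gt0.
Qed.

Lemma bin_pred_ratio : 'C(N, k)%:R = N%:R / k%:R * c1 :> R.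
Proof.
have k0 : k%:R != 0 :> R by rewrite pnatr_eq0 -lt0n.
by apply: (mulfI k0); rewrite -natrM -mul_bin_pred // natrM; field.
Qed.

Lemma sum_lms_sqr_div_srs :
  \sum_s lms s ^+ 2 / srs N k s =
  N%:R / k%:R * (sumsq + (k%:R - 1) / (N%:R - 1) * (tot ^+ 2 - sumsq)) / tot ^+ 2.
Proof.
rewrite (bigID (fun s : {set 'I_N} => #|s| == k) xpredT) /=.
rewrite [X in _ + X]big1 ?addr0; last first.
  by move=> s /negbTE sk; rewrite /lms sk expr2 !mul0r.
under eq_bigr => s /eqP sk.
  rewrite lms_kset // /srs sk eqxx invrK expr_div_n -mulrA.
over.
rewrite -mulr_suml (sum_ksubsets_sqr _ _ kN2) card_ord.
rewrite -bin_pred2_ratio bin_pred_ratio.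
by field; rewrite !gt_eqF ?tot_gt0 ?c1_gt0 ?ltr0n.
Qed.

Lemma kl_lms_srs_bounds :
  0 <= \sum_s lms s * ln (lms s / srs N k s) <= N%:R * sumsq / (k%:R * tot ^+ 2).
Proof.
have lms_abs_cont s : srs N k s = 0 :> R -> lms s = 0.
  by move/eqP; rewrite srs_eq0 ?(ltnW k_lt_N) // /lms => /negbTE ->.
have /andP[-> le_chi2] := kl_div_bounds _ _ _ lms_ge0 (srs_ge0 N k) lms_abs_cont
  lms_sum1 (srs_sum1 N k (ltnW k_lt_N)).
apply: le_trans le_chi2 _; rewrite sum_lms_sqr_div_srs.
have k2 : 2 <= k%:R :> R by rewrite ler_nat.
have kN_R : k%:R < N%:R :> R by rewrite ltr_nat.
have /andP[r_ge r_le] := ratio_pred_bounds k2 kN_R.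
set r := _ * ((_ - 1) / _) in r_ge r_le.
have q_ge0 : 0 <= sumsq / tot ^+ 2.
  by rewrite divr_ge0 ?sqr_ge0 ?sumr_ge0 // => i _; rewrite sqr_ge0.
have -> : N%:R / k%:R * (sumsq + (k%:R - 1) / (N%:R - 1) * (tot ^+ 2 - sumsq))
    / tot ^+ 2 - 1 =
    N%:R * sumsq / (k%:R * tot ^+ 2) + (r * (1 - sumsq / tot ^+ 2) - 1).
  rewrite /r; field; rewrite !gt_eqF ?tot_gt0 ?ltr0n //.
  by rewrite subr_gt0 ltr1n; lia.
by rewrite gerDl subr_le0; nra.
Qed.

Section Bounded.
(* [lra] and [nra] ignore section hypotheses, hence local copies like [lo0]. *)
Variables lo hi : R.
Hypotheses (lo_gt0 : 0 < lo) (x_bounds : forall i, lo <= x i <= hi).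

Let sum_const_ord (c : R) : \sum_(j < N) c = N%:R * c.
Proof. by rewrite sumr_const card_ord mulr_natl. Qed.

Lemma tot_bounds : N%:R * lo <= tot <= N%:R * hi.
Proof.
rewrite -!sum_const_ord.
by apply/andP; split; apply: ler_sum => i _; case/andP: (x_bounds i).
Qed.

Lemma scaled_share_bounds i : lo / hi <= N%:R * x i / tot <= hi / lo.
Proof.
have /andP[lo_x x_hi] := x_bounds i; have /andP[Nlo_tot tot_Nhi] := tot_bounds.
have lo0 := lo_gt0; have hi0 : 0 < hi by lra.
have N_gt0 : 0 < N%:R :> R by rewrite ltr0n (leq_ltn_trans (leq0n i)).
have tot0 : 0 < tot by apply: lt_le_trans Nlo_tot; rewrite mulr_gt0.
have N0 : 0 <= N%:R :> R by [].
apply/andP; split.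
  rewrite ler_pdivlMr // mulrAC ler_pdivrMr //; nra.
rewrite ler_pdivrMr // mulrAC ler_pdivlMr //; nra.
Qed.

Lemma kl_lms_srs_le :
  \sum_s lms s * ln (lms s / srs N k s) <= (hi / lo) ^+ 2 / k%:R.
Proof.
have /andP[_ kl_le] := kl_lms_srs_bounds; apply: le_trans kl_le _.
have /andP[Nlo_tot _] := tot_bounds; have lo0 := lo_gt0.
have sumsq_le : sumsq <= N%:R * hi ^+ 2.
  rewrite -sum_const_ord; apply: ler_sum => i _.
  by have /andP[lo_x x_hi] := x_bounds i; rewrite ler_sqr ?nnegrE; lra.
have k0 : 0 < k%:R :> R by rewrite ltr0n.
have tot0 := tot_gt0.
rewrite ler_pdivrMr ?mulr_gt0 ?exprn_gt0 //.
have -> : (hi / lo) ^+ 2 / k%:R * (k%:R * tot ^+ 2) = (hi * (tot / lo)) ^+ 2.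
  by field; rewrite !gt_eqF.
have Ntot : N%:R <= tot / lo by rewrite ler_pdivlMr.
have N0 : 0 <= N%:R :> R by [].
have hi0 : 0 <= hi by have /andP[] := x_bounds (Ordinal k_lt_N); lra.
apply: (@le_trans _ _ ((hi * N%:R) ^+ 2)).
  by rewrite (_ : _ ^+ 2 = N%:R * (N%:R * hi ^+ 2)); [exact: ler_wpM2l|ring].
have h1 : hi * N%:R <= hi * (tot / lo) := ler_wpM2l hi0 Ntot.
have hN0 : 0 <= hi * N%:R := mulr_ge0 hi0 N0.
by rewrite ler_sqr ?nnegrE // (le_trans hN0).
Qed.

Lemma lms_incl_prob_bounds i :
  2^-1 <= k%:R^-1 * N%:R * \sum_(s : {set 'I_N} | i \in s) lms s <= hi / lo + 1.
Proof.
rewrite lms_incl_prob.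
have k0 : 0 < k%:R :> R by rewrite ltr0n.
have k2 : 2 <= k%:R :> R by rewrite ler_nat.
have kN_R : k%:R < N%:R :> R by rewrite ltr_nat.
have /andP[r_ge r_le] := ratio_pred_bounds k2 kN_R.
have tot0 := tot_gt0.
have share_le : N%:R * (x i / tot) <= hi / lo.
  by rewrite mulrA; case/andP: (scaled_share_bounds i).
have a_ge0 : 0 <= x i / tot by rewrite divr_ge0 // ltW.
have a_le1 : x i / tot <= 1.
  rewrite ler_pdivrMr // mul1r (bigD1 i) //= lerDl.
  by apply: sumr_ge0 => j _; rewrite ltW.
have b_le1 : (k%:R - 1) / (N%:R - 1) <= 1 :> R by rewrite ler_pdivrMr; lra.
set a := x i / tot in share_le a_ge0 a_le1 *.
set b := (k%:R - 1) / (N%:R - 1) in r_ge r_le b_le1 *.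
have -> : k%:R^-1 * N%:R * (a + (1 - a) * b) =
          N%:R * a / k%:R + N%:R / k%:R * b * (1 - a) by field; rewrite gt_eqF.
set r := N%:R / k%:R * b in r_ge r_le *.
have Na_ge0 : 0 <= N%:R * a by rewrite mulr_ge0.
have c_le : N%:R * a / k%:R <= N%:R * a.
  by rewrite ler_pdivrMr // ler_peMr // ler1n ltnW.
have ra_le : r * a <= N%:R * a / k%:R.
  have -> : r * a = N%:R * a / k%:R * b by rewrite /r; field; rewrite gt_eqF.
  by apply: ler_piMr; rewrite // divr_ge0 // ltW.
have ra_ge0 : 0 <= r * a by rewrite mulr_ge0 //; lra.
apply/andP; split; lra.
Qed.

End Bounded.

End LahiriMidzunoSen.

Section Asymptotics.
Local Open Scope classical_set_scope.
Context {R : realType} {d : measure_display} {T : measurableType d}.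
Variables (P : probability T R) (X : nat -> T -> R) (N n : nat -> nat).
Hypotheses (X_gt0 : forall i omega, 0 < X i omega)
  (n_lt_N : forall nu, (n nu < N nu)%N) (n_cvg : n @ \oo --> \oo).
Hypothesis ratio_bounded : {ae P, forall omega, exists K : R,
  \forall nu \near \oo, pop_max X N nu omega / pop_min X N nu omega <= K}.

Local Notation pop nu omega := (fun i : 'I_(N nu) => X i omega).

Lemma pop_min_gt0 nu omega : 0 < pop_min X N nu omega.
Proof.
apply: (big_ind (fun v => 0 < v)); first exact: X_gt0.
  by move=> a b a0 b0; rewrite lt_min a0 b0.
by move=> i _; exact: X_gt0.
Qed.

Lemma pop_bounds nu omega (i : 'I_(N nu)) :
  pop_min X N nu omega <= X i omega <= pop_max X N nu omega.
Proof. by rewrite bigmin_le le_bigmax. Qed.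

Lemma N_gt0 nu : (0 < N nu)%N.
Proof. exact: leq_ltn_trans (n_lt_N nu). Qed.

Lemma pop_ratio_gt0 nu omega :
  0 < pop_max X N nu omega / pop_min X N nu omega.
Proof.
have lo_gt0 := pop_min_gt0 nu omega.
have /andP[lo_x x_hi] := pop_bounds nu omega (Ordinal (N_gt0 nu)).
by rewrite divr_gt0 // (lt_le_trans lo_gt0) // (le_trans lo_x).
Qed.

Lemma n_gt1_near : \forall nu \near \oo, (1 < n nu)%N.
Proof. by move/cvgnyPgt: n_cvg; apply. Qed.

Lemma inv_n_cvg0 : ((n nu)%:R^-1 : R) @[nu --> \oo] --> 0.
Proof.
apply/(@gtr0_cvgV0 _ _ _ _ (fun nu => (n nu)%:R)); last exact/cvgrnyP.
by apply: filterS n_gt1_near => nu n1; rewrite ltr0n ltnW.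
Qed.

Lemma ratio_bounded_gt0 : {ae P, forall omega, exists2 K : R, 0 < K &
  \forall nu \near \oo, pop_max X N nu omega / pop_min X N nu omega <= K}.
Proof.
apply: filterS ratio_bounded => omega [K ratio_le].
exists (Num.max K 1); first by rewrite lt_max ltr01 orbT.
by apply: filterS ratio_le => nu /le_trans; apply; rewrite le_max lexx.
Qed.

Lemma KL_LMS_uniform_bounds nu omega : (1 < n nu)%N ->
  0 <= KL N (LMS N n X) (rejective N n (fun nu _ _ => (N nu)%:R^-1)) nu omega
    <= (pop_max X N nu omega / pop_min X N nu omega) ^+ 2 / (n nu)%:R.
Proof.
move=> n_gt1.
have N_inv_neq0 : (N nu)%:R^-1 != 0 :> R.
  by rewrite invr_eq0 pnatr_eq0 -lt0n N_gt0.
rewrite /KL (eq_bigr (fun s => lms (N nu) (n nu) (pop nu omega) s *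
    ln (lms (N nu) (n nu) (pop nu omega) s / srs (N nu) (n nu) s))); last first.
  by move=> s _; rewrite rejective_const // ltnW.
have x_gt0 i : 0 < X i omega := X_gt0 i omega.
have /andP[-> _] := kl_lms_srs_bounds _ _ _ x_gt0 n_gt1 (n_lt_N nu).
exact: kl_lms_srs_le _ _ _ x_gt0 n_gt1 (n_lt_N nu) _ _
  (pop_min_gt0 nu omega) (pop_bounds nu omega).
Qed.

Lemma LMS_high_entropy : high_entropy P N n (LMS N n X).
Proof.
exists (fun nu _ _ => (N nu)%:R^-1); split.
  move=> nu omega; split => [i|]; first by rewrite invr_gt0 ltr0n N_gt0.
  rewrite sumr_const card_ord -(mulr_natr (N nu)%:R^-1).
  by rewrite mulVf // pnatr_eq0 -lt0n N_gt0.
apply: filterS ratio_bounded_gt0 => omega [K K_gt0 ratio_le].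
apply: (squeeze_cvgr (f := fun=> 0) (h := fun nu => K ^+ 2 * (n nu)%:R^-1)).
- apply: filterS2 n_gt1_near ratio_le => nu n_gt1 ratio_nu.
  have /andP[-> KL_le] := KL_LMS_uniform_bounds nu omega n_gt1.
  apply: le_trans KL_le _.
  have n_inv_gt0 : 0 < (n nu)%:R^-1 :> R by rewrite invr_gt0 ltr0n ltnW.
  have ratio_ge0 := ltW (pop_ratio_gt0 nu omega); have K_ge0 := ltW K_gt0.
  by rewrite ler_pM2r // ler_sqr ?nnegrE.
- exact: cvg_cst.
- by rewrite -(mulr0 (K ^+ 2)); apply: cvgMl_tmp; exact: inv_n_cvg0.
Qed.

Lemma SRSWOR_incl_bounded : incl_bounded P N n (SRSWOR N n).
Proof.
apply: aeW => omega; exists 1, 1; split; [exact: ltr01 | split; [exact: ltr01 |]].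
apply: filterS n_gt1_near => nu n_gt1 i.
have N0 : (N nu)%:R != 0 :> R by rewrite pnatr_eq0 -lt0n N_gt0.
have n0 : (n nu)%:R != 0 :> R by rewrite pnatr_eq0 -lt0n ltnW.
rewrite /incl_prob (srs_incl_prob _ _ (ltnW n_gt1) (ltnW (n_lt_N nu))).
by rewrite (_ : _ * _ = 1) ?lexx //; field; rewrite n0 N0.
Qed.

Lemma LMS_incl_bounded : incl_bounded P N n (LMS N n X).
Proof.
apply: filterS ratio_bounded_gt0 => omega [K K_gt0 ratio_le].
exists 2^-1, (K + 1); split; [by rewrite invr_gt0 | split; [lra |]].
apply: filterS2 n_gt1_near ratio_le => nu n_gt1 ratio_nu i.
have /andP[-> le_ratio] := lms_incl_prob_bounds _ _ _ (fun i => X_gt0 i omega)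
  n_gt1 (n_lt_N nu) _ _ (pop_min_gt0 nu omega) (pop_bounds nu omega) i.
by apply: le_trans le_ratio _; rewrite lerD2r.
Qed.

Lemma piPS_incl_bounded D : piPS P N n X D -> incl_bounded P N n D.
Proof.
move=> piD.
apply: filterS2 piD ratio_bounded_gt0 => omega pi_eq [K K_gt0 ratio_le].
exists K^-1, K; split; [by rewrite invr_gt0 | split; [by [] |]].
apply: filterS3 n_gt1_near pi_eq ratio_le => nu n_gt1 pi_nu ratio_nu i.
have n0 : (n nu)%:R != 0 :> R by rewrite pnatr_eq0 -lt0n ltnW.
have ratio_gt0 := pop_ratio_gt0 nu omega.
have /andP[share_ge share_le] :=
  scaled_share_bounds _ _ _ _ (pop_min_gt0 nu omega) (pop_bounds nu omega) i.
have tot_gt0 := tot_gt0 _ _ _ (fun i => X_gt0 i omega) (n_lt_N nu).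
rewrite pi_nu (_ : (n nu)%:R^-1 * _ * _ =
                   (N nu)%:R * X i omega / \sum_(j < N nu) X j omega); last first.
  by rewrite /pop_total; field; rewrite n0 gt_eqF.
rewrite (le_trans share_le ratio_nu) andbT; apply: le_trans share_ge.
by rewrite -invf_div lef_pV2 ?posrE.
Qed.

End Asymptotics.

Local Open Scope classical_set_scope.

Theorem lemma1 (R : realType) (d : measure_display) (T : measurableType d)
  (P : probability T R) (X : nat -> {RV P >-> R}) (N n : nat -> nat)
  (hiid : iid P X)
  (hpos : forall i omega, 0 < X i omega)
  (hnN : forall nu, (n nu < N nu)%N)
  (hnest : {homo N : a b / (a <= b)%N})
  (hN : N @ \oo --> \oo)
  (hn : n @ \oo --> \oo)
  (hC2 : C2 P X N) :
  high_entropy P N n (LMS N n (fun i omega => X i omega)) /\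
  incl_bounded P N n (SRSWOR N n) /\
  incl_bounded P N n (LMS N n (fun i omega => X i omega)) /\
  (forall D : design N,
     is_design N n D -> high_entropy P N n D ->
     piPS P N n (fun i omega => X i omega) D -> incl_bounded P N n D).
Proof.
have [_ [_ ratio_bounded]] := hC2.
split; first exact: LMS_high_entropy hpos hnN hn ratio_bounded.
split; first exact: SRSWOR_incl_bounded hnN hn.
split; first exact: LMS_incl_bounded hpos hnN hn ratio_bounded.
by move=> D _ _; exact: piPS_incl_bounded hpos hnN hn ratio_bounded D.
Qed.
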